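(* Let $X$ be a vector field on $\mathbb{S}^1$. Then: (1) if $X$ is continuous, then $\mathcal{E}_X^+$ and $\mathcal{E}_X^-$ extend continuously to $X$; (2) if $X$ is lower semicontinuous, then $\mathcal{E}_X^-$ extends radially to $X$; (3) if $X$ is upper semicontinuous, then $\mathcal{E}_X^+$ extends radially to $X$.
   Context: $\mathbb{R}^{1,2}$ is $\mathbb{R}^3$ with $\langle x,y\rangle=-x_0y_0+x_1y_1+x_2y_2$; $\Pi(x_0,x_1,x_2)=(x_1/x_0,x_2/x_0)$ identifies $\mathbb{H}^2$ with the Klein disk $\mathbb{D}^2$, boundary $\mathbb{S}^1$. The Minkowski cross product satisfies $\langle x\boxtimes y,v\rangle=\det(x,y,v)$ for all $v$. A vector field $X$ on $\mathbb{S}^1$ is written $X(z)=iz\phi_X(z)$, $\phi_X:\mathbb{S}^1\to\mathbb{R}$; $X$ is lower/upper semicontinuous if $\phi_X$ is. For $\eta\in\overline{\mathbb{D}^2}$, $\phi_X^-(\eta)=\sup\{a(\eta):a\text{ affine on }\mathbb{R}^2,a|_{\mathbb{S}^1}\le\phi_X\}$ and $\phi_X^+(\eta)=\inf\{a(\eta):a\text{ affine},a|_{\mathbb{S}^1}\ge\phi_X\}$. For $\eta\in\mathbb{D}^2$ let $\Sigma^-(\eta)$ be the set of $\sigma\in\mathbb{R}^{1,2}$ with $\langle(1,\xi),\sigma\rangle\le\phi_X^-(\xi)$ for all $\xi\in\mathbb{D}^2$ and equality at $\xi=\eta$ (i.e. the plane $t=\langle(1,\xi),\sigma\rangle$ in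 $\mathbb{D}^2\times\mathbb{R}$ is a support plane of the epigraph of $\phi_X^-$ at $(\eta,\phi_X^-(\eta))$), and $\Sigma^+(\eta)$ the analogous set with $\ge\phi_X^+$. (For $X$ lower, resp. upper, semicontinuous, $\Sigma^-(\eta)$, resp. $\Sigma^+(\eta)$, is always a single point or a compact segment.) Define $\mathcal{E}_X^\pm(\eta)=\mathrm{d}_{(1,\eta)}\Pi((1,\eta)\boxtimes\sigma^\pm(\eta))$, where $\sigma^\pm(\eta)$ is the unique element of $\Sigma^\pm(\eta)$ if it is a point and the midpoint of $\Sigma^\pm(\eta)$ if it is a segment. A vector field $\hat X$ on $\mathbb{D}^2$ extends continuously to $X$ if $\hat X(\eta_n)\to X(z)$ whenever $\eta_n\in\mathbb{D}^2$, $\eta_n\to z\in\mathbb{S}^1$; it extends radially to $X$ if $\lim_{s\to0^+}\hat X((1-s)z+sx)=X(z)$ for all $z\in\mathbb{S}^1$, $x\in\mathbb{D}^2$. *)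

From HB Require Import structures.
From mathcomp Require Import all_boot all_order all_algebra.
From mathcomp Require Import all_classical all_reals all_analysis.
Set Implicit Arguments. Unset Strict Implicit. Unset Printing Implicit Defensive.
Import Order.TTheory GRing.Theory Num.Theory.
Import numFieldNormedType.Exports.
Local Open Scope classical_set_scope.
Local Open Scope ring_scope.

Section Defs.
Variable R : realType.

(* points of R^2 are pairs (x1,x2); points of R^{1,2} are triples ((x0,x1),x2) *)
Definition t0 (x : R * R * R) : R := x.1.1.
Definition t1 (x : R * R * R) : R := x.1.2.
Definition t2 (x : R * R * R) : R := x.2.

Definition S1 : set (R * R) := [set z | z.1 ^+ 2 + z.2 ^+ 2 = 1].
Definition D2 : set (R * R) := [set z | z.1 ^+ 2 + z.2 ^+ 2 < 1].

Definition mink (x y : R * R * R) : R := - t0 x * t0 y + t1 x * t1 y + t2 x * t2 y.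

(* Minkowski cross product, written out: the unique vector with
   <x ⊠ y, v> = det(x,y,v) for all v (i.e. diag(-1,1,1) times the
   Euclidean cross product). *)
Definition mcross (x y : R * R * R) : R * R * R :=
  ((- (t1 x * t2 y - t2 x * t1 y), t2 x * t0 y - t0 x * t2 y),
   t0 x * t1 y - t1 x * t0 y).

Definition lift1 (xi : R * R) : R * R * R := ((1, xi.1), xi.2).

(* differential of Pi(x0,x1,x2) = (x1/x0, x2/x0) at the point x, applied to v *)
Definition dPi (x v : R * R * R) : R * R :=
  (t1 v / t0 x - t1 x * t0 v / (t0 x) ^+ 2,
   t2 v / t0 x - t2 x * t0 v / (t0 x) ^+ 2).

(* vector field X on S^1 given by X(z) = i z phi(z) *)
Definition Xf (phi : R * R -> R) (z : R * R) : R * R :=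
  (- z.2 * phi z, z.1 * phi z).

Definition affine_ev (c : R * R * R) (eta : R * R) : R :=
  t0 c + t1 c * eta.1 + t2 c * eta.2.

Definition phi_minus (phi : R * R -> R) (eta : R * R) : R :=
  sup [set y | exists c, (forall z, S1 z -> affine_ev c z <= phi z) /\ y = affine_ev c eta].
Definition phi_plus (phi : R * R -> R) (eta : R * R) : R :=
  inf [set y | exists c, (forall z, S1 z -> phi z <= affine_ev c z) /\ y = affine_ev c eta].

Definition Sigma_minus (phi : R * R -> R) (eta : R * R) : set (R * R * R) :=
  [set s | (forall xi, D2 xi -> mink (lift1 xi) s <= phi_minus phi xi)
           /\ mink (lift1 eta) s = phi_minus phi eta].
Definition Sigma_plus (phi : R * R -> R) (eta : R * R) : set (R * R * R) :=
  [set s | (forall xi, D2 xi -> phi_plus phi xi <= mink (lift1 xi) s)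
           /\ mink (lift1 eta) s = phi_plus phi eta].

Definition comb3 (t : R) (p q : R * R * R) : R * R * R :=
  (((1 - t) * t0 p + t * t0 q, (1 - t) * t1 p + t * t1 q), (1 - t) * t2 p + t * t2 q).
Definition segment3 (p q : R * R * R) : set (R * R * R) :=
  [set comb3 t p q | t in [set t : R | 0 <= t <= 1]].

(* m is "the unique element / the midpoint" of S, where S is a point or a
   compact segment *)
Definition is_midpoint_of (S : set (R * R * R)) (m : R * R * R) : Prop :=
  exists p q, S = segment3 p q /\ m = comb3 (2^-1) p q.

Definition midpt (S : set (R * R * R)) : R * R * R :=
  xget ((0, 0), 0) (is_midpoint_of S).

Definition E_minus (phi : R * R -> R) (eta : R * R) : R * R :=
  dPi (lift1 eta) (mcross (lift1 eta) (midpt (Sigma_minus phi eta))).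
Definition E_plus (phi : R * R -> R) (eta : R * R) : R * R :=
  dPi (lift1 eta) (mcross (lift1 eta) (midpt (Sigma_plus phi eta))).

Definition lsc_on (A : set (R * R)) (f : R * R -> R) : Prop :=
  forall z, A z -> forall a, a < f z -> \forall w \near within A (nbhs z), a < f w.
Definition usc_on (A : set (R * R)) (f : R * R -> R) : Prop :=
  forall z, A z -> forall a, f z < a -> \forall w \near within A (nbhs z), f w < a.

Definition extends_continuously (hX : R * R -> R * R) (X : R * R -> R * R) : Prop :=
  forall (u : nat -> R * R) (z : R * R), (forall n, D2 (u n)) -> S1 z ->
    u @ \oo --> z -> (hX \o u) @ \oo --> X z.

Definition extends_radially (hX : R * R -> R * R) (X : R * R -> R * R) : Prop :=
  forall z x, S1 z -> D2 x ->
    hX ((1 - s) * z.1 + s * x.1, (1 - s) * z.2 + s * x.2) @[s --> 0^'+] --> X z.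

End Defs.


From mathcomp Require Import all_boot all_order all_algebra.
From mathcomp Require Import all_classical all_reals all_analysis.
From mathcomp Require Import ring lra.
Import Order.TTheory GRing.Theory Num.Theory.
Import numFieldNormedType.Exports.
Local Open Scope classical_set_scope.
Local Open Scope ring_scope.
Set Implicit Arguments. Unset Strict Implicit. Unset Printing Implicit Defensive.

(* phi^- is the largest convex function on the disk lying below phi on the circle,
   and Sigma^-(eta) is the set of its support planes at eta (t1, t2 are the slopes).
   Sigma^-(eta) is nonempty: minorants that are almost optimal at eta have slopes
   bounded by the oscillation of phi^- on a cross around eta, so they cluster, and
   any cluster point is a support plane.  It is a segment: if three support planes
   had affinely independent slopes, lifting their mean by a small constant would
   give an affine function below phi^- away from eta, hence (looking along radii)
   below phi on the circle, yet above phi^- at eta.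
   In closed form E(eta) = phi^-(eta) (-eta2, eta1) + (1 - |eta|^2) (-sigma2, sigma1).
   Near a boundary point z, phi^- is close to phi(z): from below by an affine
   minorant through (z, phi(z) - e) given by lower semicontinuity, from above by
   convexity, along a chord through eta with both ends near z (continuous case)
   or along the radius ending at z (radial case).  A support slope at eta is at
   most the oscillation of phi^- on a cross of size h around eta divided by h;
   with h comparable to 1 - |eta|^2 the second term of E vanishes in the limit
   and the first one tends to X(z).  The statements about E^+ are those about
   E^- for -phi. *)

Section Geometry.
Variable R : realType.
Implicit Types (s a b : R) (w x z xi eta : R * R).

Definition sqnorm w : R := w.1 ^+ 2 + w.2 ^+ 2.
Definition lerp s z x : R * R := ((1 - s) * z.1 + s * x.1, (1 - s) * z.2 + s * x.2).
Definition displace x a b : R * R := (x.1 + a, x.2 + b).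
Definition margin xi : R := (1 - sqnorm xi) / 4.

Lemma S1E w : S1 w = (sqnorm w = 1). Proof. by []. Qed.
Lemma D2E w : D2 w = (sqnorm w < 1). Proof. by []. Qed.

Lemma sqnorm_ge0 w : 0 <= sqnorm w.
Proof. by rewrite addr_ge0 ?sqr_ge0. Qed.

Lemma sqnorm_continuous : continuous sqnorm.
Proof.
move=> w; apply: cvgD; rewrite expr2; apply: cvgM.
- exact: cvg_fst.
- exact: cvg_fst.
- exact: cvg_snd.
- exact: cvg_snd.
Qed.

Lemma abs_le1_of_sqr a b : a ^+ 2 + b ^+ 2 <= 1 -> `|a| <= 1.
Proof.
move=> h; have hb := sqr_ge0 b; rewrite -(ler_pXn2r (n := 2)) ?nnegrE //.
by rewrite expr1n real_normK ?num_real //; lra.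
Qed.

Lemma abs_coord_le1 w : sqnorm w <= 1 -> `|w.1| <= 1 /\ `|w.2| <= 1.
Proof.
rewrite /sqnorm => h; split; first exact: (abs_le1_of_sqr h).
by apply: (@abs_le1_of_sqr _ w.1); rewrite addrC.
Qed.

Lemma abs_coord_S1 w : S1 w -> `|w.1| <= 1 /\ `|w.2| <= 1.
Proof. by rewrite S1E => hw; apply: abs_coord_le1; rewrite hw. Qed.

Lemma abs_coord_D2 w : D2 w -> `|w.1| <= 1 /\ `|w.2| <= 1.
Proof. by rewrite D2E => /ltW; exact: abs_coord_le1. Qed.

Lemma compact_S1 : compact (@S1 R).
Proof.
have closed_S1 : closed (@S1 R).
  exact: (continuous_closedP sqnorm).1 sqnorm_continuous _ (@closed_eq _ 1).
apply: subclosed_compact closed_S1 (compact_setX (@segment_compact _ (-1) 1)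
  (@segment_compact _ (-1) 1)) _ => w /eqP; rewrite -/(sqnorm w) eq_le => /andP[+ _].
by move=> /abs_coord_le1[h1 h2]; split; rewrite /= in_itv /= -ler_norml.
Qed.

Lemma affine_ev_lerp c s z x :
  affine_ev c (lerp s z x) = (1 - s) * affine_ev c z + s * affine_ev c x.
Proof. rewrite /affine_ev /lerp /=; ring. Qed.

Lemma sqnorm_lerp s z x : sqnorm (lerp s z x) =
  (1 - s) * sqnorm z + s * sqnorm x - s * (1 - s) * ((z.1 - x.1) ^+ 2 + (z.2 - x.2) ^+ 2).
Proof. rewrite /sqnorm /lerp /=; ring. Qed.

Lemma D2_lerp s z x : S1 z -> D2 x -> 0 < s <= 1 -> D2 (lerp s z x).
Proof.
rewrite !D2E S1E => hz hx /andP[s0 s1].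
have : 0 <= s * (1 - s) * ((z.1 - x.1) ^+ 2 + (z.2 - x.2) ^+ 2).
  by apply: mulr_ge0; [apply: mulr_ge0; lra | rewrite addr_ge0 ?sqr_ge0].
have : s * sqnorm x < s * 1 by rewrite ltr_pM2l.
rewrite sqnorm_lerp hz; lra.
Qed.

Lemma lerp_displace s z x a b : lerp s z (displace x a b) = displace (lerp s z x) (s * a) (s * b).
Proof. by rewrite /lerp /displace /=; congr (_, _); ring. Qed.

Lemma D2_displace xi a b : D2 xi -> `|a| + `|b| <= margin xi -> D2 (displace xi a b).
Proof.
rewrite !D2E /margin => hxi hab.
have [x1 x2] := abs_coord_le1 (ltW hxi).
have n0 := sqnorm_ge0 xi.
have dot : xi.1 * a + xi.2 * b <= `|a| + `|b|.
  apply: le_trans (ler_norm _) _; apply: le_trans (ler_normD _ _) _; rewrite !normrM.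
  by apply: lerD; rewrite -[leRHS]mul1r ler_wpM2r.
have sq : a ^+ 2 + b ^+ 2 <= (`|a| + `|b|) ^+ 2.
  rewrite -(real_normK (num_real a)) -(real_normK (num_real b)).
  by have := mulr_ge0 (normr_ge0 a) (normr_ge0 b); nra.
have small : (`|a| + `|b|) ^+ 2 <= (1 - sqnorm xi) / 16.
  have := addr_ge0 (normr_ge0 a) (normr_ge0 b); nra.
have -> : sqnorm (displace xi a b) =
  sqnorm xi + 2 * (xi.1 * a + xi.2 * b) + (a ^+ 2 + b ^+ 2) by rewrite /sqnorm /displace /=; ring.
lra.
Qed.

Lemma midchord eta : D2 eta -> exists w w', [/\ S1 w, S1 w',
  eta = ((w.1 + w'.1) / 2, (w.2 + w'.2) / 2) &
  (w.1 - eta.1) ^+ 2 + (w.2 - eta.2) ^+ 2 = 1 - sqnorm eta].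
Proof.
rewrite /D2 /S1 -/(sqnorm eta); case: eta => e1 e2 /= h.
have [n0|n0] := eqVneq (sqnorm (e1, e2)) 0.
  have [-> ->] : e1 = 0 /\ e2 = 0.
    by move: n0 (sqr_ge0 e1) (sqr_ge0 e2); rewrite /sqnorm /= => ? ? ?; split;
      apply/eqP; rewrite -sqrf_eq0 eq_le sqr_ge0 andbT; lra.
  by exists (1, 0), (-1, 0); split; rewrite /S1 /sqnorm /=; try congr (_, _); field.
have np : 0 < sqnorm (e1, e2) by rewrite lt_def n0 sqnorm_ge0.
move: h n0 np; rewrite /sqnorm /=; set n := e1 ^+ 2 + e2 ^+ 2 => h n0 np.
have hk : Num.sqrt ((1 - n) / n) ^+ 2 * n = 1 - n.
  by rewrite sqr_sqrtr ?divfK ?gt_eqF // divr_ge0 //; lra.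
set k := Num.sqrt _ in hk.
exists (e1 - k * e2, e2 + k * e1), (e1 + k * e2, e2 - k * e1) => /=.
split; last by rewrite -hk /n; ring.
- by rewrite -[1](subrK n) -hk /n; ring.
- by rewrite -[1](subrK n) -hk /n; ring.
- by congr (_, _); field.
Qed.

Lemma sqdist_S1_ge z eta : S1 z -> sqnorm eta <= 1 ->
  (1 - sqnorm eta) ^+ 2 <= 4 * ((z.1 - eta.1) ^+ 2 + (z.2 - eta.2) ^+ 2).
Proof.
rewrite /S1 /sqnorm /= => hz he.
set a1 := z.1 - eta.1; set a2 := z.2 - eta.2.
set b1 := z.1 + eta.1; set b2 := z.2 + eta.2.
have -> : 1 - (eta.1 ^+ 2 + eta.2 ^+ 2) = a1 * b1 + a2 * b2 by rewrite -hz /a1 /a2 /b1 /b2; ring.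
have lagrange : (a1 * b1 + a2 * b2) ^+ 2 + (a1 * b2 - a2 * b1) ^+ 2 =
   (a1 ^+ 2 + a2 ^+ 2) * (b1 ^+ 2 + b2 ^+ 2) by ring.
have hb : b1 ^+ 2 + b2 ^+ 2 <= 4.
  have : b1 ^+ 2 + b2 ^+ 2 + (a1 ^+ 2 + a2 ^+ 2) =
    2 * (z.1 ^+ 2 + z.2 ^+ 2) + 2 * (eta.1 ^+ 2 + eta.2 ^+ 2) by rewrite /a1 /a2 /b1 /b2; ring.
  by rewrite hz; have := sqr_ge0 a1; have := sqr_ge0 a2; lra.
have := ler_wpM2l (addr_ge0 (sqr_ge0 a1) (sqr_ge0 a2)) hb.
have := sqr_ge0 (a1 * b2 - a2 * b1); nra.
Qed.

Lemma abs_slope_le (g h p q : R) : 0 < h -> g * h <= p -> - g * h <= q -> h * `|g| <= Num.max p q.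
Proof.
move=> h0 hp hq; rewrite le_max mulrC.
by case: (ler0P g) => g0; apply/orP; [right | left].
Qed.

Lemma normr_dot_le a1 a2 d1 d2 rho : `|d1| < rho -> `|d2| < rho ->
  `|a1 * d1 + a2 * d2| <= (`|a1| + `|a2|) * rho.
Proof.
move=> h1 h2; apply: le_trans (ler_normD _ _) _; rewrite !normrM mulrDl.
by apply: lerD; apply: ler_wpM2l => //; apply: ltW.
Qed.

Lemma ball2E z rho w : ball z rho w <-> `|w.1 - z.1| < rho /\ `|w.2 - z.2| < rho.
Proof. by rewrite /ball /= /prod_ball /ball /= !(distrC z.1) !(distrC z.2). Qed.

Lemma one_sub_sqnorm_le z xi rho : S1 z -> D2 xi -> ball z rho xi ->
  1 - sqnorm xi <= 4 * rho.
Proof.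
move=> hz hxi /ball2E[h1 h2].
have [a1 a2] := abs_coord_S1 hz; have [b1 b2] := abs_coord_D2 hxi.
have -> : 1 - sqnorm xi = (z.1 + xi.1) * (z.1 - xi.1) + (z.2 + xi.2) * (z.2 - xi.2).
  by move: hz; rewrite /S1 /sqnorm /= => <-; ring.
rewrite -normrN opprB in h1; rewrite -normrN opprB in h2.
apply: le_trans (ler_norm _) _; apply: le_trans (normr_dot_le _ _ h1 h2) _.
have r0 : 0 <= rho by apply: le_trans (ltW h1).
apply: ler_wpM2r => //; have := ler_normD z.1 xi.1; have := ler_normD z.2 xi.2; lra.
Qed.

Lemma one_sub_sqnorm_lerp s z x : S1 z -> D2 x -> 0 <= s <= 1 ->
  1 - sqnorm (lerp s z x) <= 5 * s.
Proof.
rewrite S1E D2E => hz hx /andP[s0 s1]; rewrite sqnorm_lerp hz.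
have n0 := sqnorm_ge0 x.
have hq : (z.1 - x.1) ^+ 2 + (z.2 - x.2) ^+ 2 <= 4.
  have : (z.1 - x.1) ^+ 2 + (z.2 - x.2) ^+ 2 + ((z.1 + x.1) ^+ 2 + (z.2 + x.2) ^+ 2) =
     2 * sqnorm z + 2 * sqnorm x by rewrite /sqnorm; ring.
  rewrite hz.
  by have := sqr_ge0 (z.1 + x.1); have := sqr_ge0 (z.2 + x.2); lra.
have := addr_ge0 (sqr_ge0 (z.1 - x.1)) (sqr_ge0 (z.2 - x.2)).
have : 0 <= s * (1 - s) by nra.
nra.
Qed.

Lemma lerp_near s z x : S1 z -> D2 x -> 0 <= s ->
  `|(lerp s z x).1 - z.1| <= 2 * s /\ `|(lerp s z x).2 - z.2| <= 2 * s.
Proof.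
move=> hz hx s0; have [a1 a2] := abs_coord_S1 hz; have [b1 b2] := abs_coord_D2 hx.
have e u v : (1 - s) * u + s * v - u = (v - u) * s by ring.
rewrite /lerp /= !e !normrM (ger0_norm s0); split; apply: ler_wpM2r => //;
  by apply: le_trans (ler_normB _ _) _; lra.
Qed.

End Geometry.

Lemma compact_nested_cluster {T : topologicalType} (K : set T) (B : nat -> set T) :
  compact K -> (forall n, B n !=set0) -> (forall n, B n `<=` K) ->
  (forall n, B n.+1 `<=` B n) ->
  exists2 p, K p & forall n U, nbhs p U -> (B n `&` U) !=set0.
Proof.
move=> cK ne sK nest.
have mono n k : (n <= k)%N -> B k `<=` B n.
  move=> /subnK <-; elim: (k - n)%N => [|j ih] //=.
  by rewrite addSn; apply: subset_trans (nest _) ih.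
have FF : Filter (filter_from setT B).
  apply: filter_fromT_filter; first by exists 0%N.
  by move=> i j; exists (maxn i j) => x Bx; split; apply: mono Bx;
    rewrite ?leq_maxl ?leq_maxr.
have PF : ProperFilter (filter_from setT B).
  by apply: filter_from_proper => i _; exact: ne.
have [p [Kp cp]] := cK _ PF (ex_intro2 _ _ 0%N I (sK 0%N)).
by exists p => // n U hU; apply: cp => //; exists n.
Qed.

Lemma not_ball_sqdist {R : realType} (z w : R * R) (r : R) : 0 <= r -> ~ ball z r w ->
  r ^+ 2 <= (w.1 - z.1) ^+ 2 + (w.2 - z.2) ^+ 2.
Proof.
move=> r0 /ball2E /not_andP[] /negP; rewrite -leNgt => h.
- suff : r ^+ 2 <= (w.1 - z.1) ^+ 2 by have := sqr_ge0 (w.2 - z.2); lra.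
  by rewrite -[X in _ <= X]real_normK ?num_real // lerXn2r ?nnegrE.
- suff : r ^+ 2 <= (w.2 - z.2) ^+ 2 by have := sqr_ge0 (w.1 - z.1); lra.
  by rewrite -[X in _ <= X]real_normK ?num_real // lerXn2r ?nnegrE.
Qed.

Section Semicontinuity.
Variable R : realType.
Variable phi : R * R -> R.
Implicit Types (z w : R * R).

Definition lsc_at z := forall a, a < phi z ->
  exists2 r, 0 < r & forall w, S1 w -> ball z r w -> a < phi w.

Definition cont_at z := forall e, 0 < e ->
  exists2 r, 0 < r & forall w, S1 w -> ball z r w -> `|phi w - phi z| < e.

Lemma lsc_at_cont_at z : cont_at z -> lsc_at z.
Proof.
move=> hc a ha; have [r r0 hr] := hc (phi z - a) ltac:(lra).
exists r => // w hw hb; have := hr w hw hb.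
have := ler_norm (- (phi w - phi z)); rewrite normrN; lra.
Qed.

Lemma lsc_bounded_below : (forall z, S1 z -> lsc_at z) ->
  exists m, forall z, S1 z -> m <= phi z.
Proof.
move=> hl; apply: contrapT => unbounded.
pose B n := [set w | S1 w /\ phi w < - n%:R].
have ne n : B n !=set0.
  apply: contrapT => h; apply: unbounded; exists (- n%:R) => z hz.
  by rewrite leNgt; apply/negP => hlt; apply: h; exists z.
have nest n : B n.+1 `<=` B n.
  by move=> w [hw h]; split => //; apply: lt_le_trans h _; rewrite lerN2 ler_nat.
have [p Sp cp] := compact_nested_cluster (@compact_S1 R) ne (fun n w => @proj1 _ _) nest.
have [r r0 hr] := hl p Sp (phi p - 1) ltac:(lra).
have := archi_boundP (addr_ge0 (normr_ge0 (phi p)) ler01).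
set n := Num.Def.archi_bound _ => hn.
have [w [[hw hwn] hpw]] := cp n _ (nbhsx_ballx p _ r0).
have := hr w hw hpw; have := ler_norm (- phi p); rewrite normrN; lra.
Qed.

End Semicontinuity.

Section PhiMinus.
Variable R : realType.
Implicit Types (s : R) (w x z xi eta : R * R) (c : R * R * R).
Variable phi : R * R -> R.
Local Notation pm := (phi_minus phi).

Definition minorant c := forall z, S1 z -> affine_ev c z <= phi z.

Lemma affine_ev_mid c w w' :
  affine_ev c ((w.1 + w'.1) / 2, (w.2 + w'.2) / 2) = (affine_ev c w + affine_ev c w') / 2.
Proof. by rewrite /affine_ev /t0 /t1 /t2 /=; field. Qed.

Lemma minorant_le_mid c w w' : minorant c -> S1 w -> S1 w' ->
  affine_ev c ((w.1 + w'.1) / 2, (w.2 + w'.2) / 2) <= (phi w + phi w') / 2.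
Proof.
move=> hc hw hw'; rewrite affine_ev_mid ler_pM2r ?invr_gt0 ?ltr0n //.
by apply: lerD; apply: hc.
Qed.

Variable m : R.
Hypothesis phi_ge : forall z, S1 z -> m <= phi z.

Let minorant_values eta := [set y | exists2 c, minorant c & y = affine_ev c eta].

Lemma minorant_cst : minorant ((m, 0), 0).
Proof. by move=> z hz; rewrite /affine_ev /t0 /t1 /t2 /= !mul0r !addr0; apply: phi_ge. Qed.

Lemma minorant_values_nonempty eta : minorant_values eta !=set0.
Proof. by exists (affine_ev ((m, 0), 0) eta); exists ((m, 0), 0); first exact: minorant_cst. Qed.

Lemma phi_minusE eta : pm eta = sup (minorant_values eta).
Proof.
congr sup; apply/seteqP; split => y; first by case=> c [? ->]; exists c.
by case=> c ? ->; exists c.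
Qed.

Lemma has_sup_minorant_values eta : D2 eta -> has_sup (minorant_values eta).
Proof.
move=> /midchord[w [w' [hw hw' -> _]]]; split; first exact: minorant_values_nonempty.
by exists ((phi w + phi w') / 2) => y [c hc ->]; apply: minorant_le_mid.
Qed.

Lemma phi_minus_ge c eta : D2 eta -> minorant c -> affine_ev c eta <= pm eta.
Proof.
by move=> he hc; rewrite phi_minusE; apply: (ub_le_sup (has_sup_minorant_values he).2); exists c.
Qed.

Lemma phi_minus_le eta M : (forall c, minorant c -> affine_ev c eta <= M) -> pm eta <= M.
Proof.
move=> h; rewrite phi_minusE.
by apply: (ge_sup (minorant_values_nonempty eta)) => y [c hc ->]; apply: h.
Qed.

Lemma phi_minus_le_mid w w' : S1 w -> S1 w' ->
  pm ((w.1 + w'.1) / 2, (w.2 + w'.2) / 2) <= (phi w + phi w') / 2.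
Proof. by move=> hw hw'; apply: phi_minus_le => c hc; apply: minorant_le_mid. Qed.

Lemma phi_minus_lerp s z x : S1 z -> D2 x -> 0 <= s <= 1 ->
  pm (lerp s z x) <= (1 - s) * phi z + s * pm x.
Proof.
move=> hz hx /andP[s0 s1]; apply: phi_minus_le => c hc; rewrite affine_ev_lerp.
by apply: lerD; apply: ler_wpM2l; [lra | exact: hc | done | exact: phi_minus_ge].
Qed.

Lemma minorant_near_phi_minus eta e : D2 eta -> 0 < e ->
  exists2 c, minorant c & pm eta - e < affine_ev c eta.
Proof.
move=> he e0; have := sup_adherent e0 (has_sup_minorant_values he).
by rewrite -phi_minusE => -[y [c hc ->] hy]; exists c.
Qed.

Lemma minorant_of_radial b z x : S1 z -> D2 x ->
  (forall s, 0 < s -> s <= 2^-1 -> affine_ev b (lerp s z x) <= pm (lerp s z x)) ->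
  affine_ev b z <= phi z.
Proof.
move=> hz hx h; rewrite leNgt; apply/negP => hlt.
set e := affine_ev b z - phi z; set C := pm x - affine_ev b x.
have e0 : 0 < e by rewrite subr_gt0.
have Cp : 0 < `|C| + 1 by have := normr_ge0 C; lra.
set s := Num.min (2^-1) (e / (4 * (`|C| + 1))).
have s0 : 0 < s by rewrite lt_min invr_gt0 ltr0n divr_gt0 ?mulr_gt0.
have s1 : s <= 2^-1 by rewrite ge_min lexx.
have s2 : s * (4 * (`|C| + 1)) <= e by rewrite -ler_pdivlMr ?mulr_gt0 // ge_min lexx orbT.
have s01 : 0 <= s <= 1 by apply/andP; split; lra.
have H3 : (1 - s) * e <= s * C.
  have := h s s0 s1; have := phi_minus_lerp hz hx s01; rewrite affine_ev_lerp /e /C.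
  set P := pm _; nra.
have : s * C <= s * `|C| by rewrite ler_wpM2l ?ler_norm //; lra.
nra.
Qed.

(* On the circle |w - z|^2 = 2 - 2 z.w, so the paraboloid a - K |w - z|^2 / 2 is affine
   there; K is large enough for it to stay below phi outside the ball where phi > a. *)
Lemma lsc_minorant z a : S1 z -> lsc_at phi z -> a < phi z ->
  exists2 c, minorant c & affine_ev c z = a.
Proof.
move=> hz hl ha; have [r r0 hr] := hl a ha.
set K := 2 * (`|a| + `|m|) / r ^+ 2.
have r2 : 0 < r ^+ 2 by rewrite exprn_gt0.
have K0 : 0 <= K by rewrite divr_ge0 ?mulr_ge0 ?addr_ge0 // ltW.
have hK : K * r ^+ 2 = 2 * (`|a| + `|m|) by rewrite divfK ?gt_eqF.
set c := ((a - K, K * z.1), K * z.2).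
have ev w : S1 w -> affine_ev c w = a - K / 2 * ((w.1 - z.1) ^+ 2 + (w.2 - z.2) ^+ 2).
  move: hz; rewrite !S1E /sqnorm /affine_ev /t0 /t1 /t2 /= => hz hw.
  have -> : (w.1 - z.1) ^+ 2 + (w.2 - z.2) ^+ 2 =
    (w.1 ^+ 2 + w.2 ^+ 2) + (z.1 ^+ 2 + z.2 ^+ 2) - 2 * (w.1 * z.1 + w.2 * z.2) by ring.
  by rewrite hw hz; field.
exists c; last by rewrite ev // !subrr expr0n /= addr0 mulr0 subr0.
move=> w hw; rewrite ev //.
have KS : 0 <= K / 2 * ((w.1 - z.1) ^+ 2 + (w.2 - z.2) ^+ 2).
  by rewrite !mulr_ge0 ?invr_ge0 ?addr_ge0 ?sqr_ge0.
have [/(hr w hw) | far] := pselect (ball z r w); first lra.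
have := ler_wpM2l K0 (not_ball_sqdist (ltW r0) far); rewrite hK.
have := phi_ge hw; have := ler_norm a; have := ler_norm (- m); rewrite normrN; lra.
Qed.

Lemma phi_minus_lower z e : S1 z -> lsc_at phi z -> 0 < e ->
  exists2 rho, 0 < rho & forall xi, D2 xi -> ball z rho xi -> phi z - e < pm xi.
Proof.
move=> hz hl e0.
have [c hc hcz] := lsc_minorant (a := phi z - e / 2) hz hl ltac:(lra).
set L := `|t1 c| + `|t2 c|.
have L1 : 0 < L + 1 by rewrite /L; have := normr_ge0 (t1 c); have := normr_ge0 (t2 c); lra.
set q := e / (2 * (L + 1)).
have q0 : 0 < q by rewrite divr_gt0 ?mulr_gt0.
have hq : (L + 1) * q = e / 2 by rewrite /q; field; rewrite gt_eqF.
exists q => // xi hxi /ball2E[h1 h2].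
have := normr_dot_le (t1 c) (t2 c) h1 h2.
have -> : t1 c * (xi.1 - z.1) + t2 c * (xi.2 - z.2) = affine_ev c xi - affine_ev c z.
  by rewrite /affine_ev; ring.
rewrite hcz -/L mulrDl mul1r in hq * => hb.
have := phi_minus_ge hxi hc; have := ler_norm (- (affine_ev c xi - (phi z - e / 2))).
rewrite normrN; nra.
Qed.

End PhiMinus.

Section Minkowski.
Variable R : realType.
Implicit Types (t : R) (xi : R * R) (c p q s : R * R * R).

Lemma triple_eq p q : t0 p = t0 q -> t1 p = t1 q -> t2 p = t2 q -> p = q.
Proof. by case: p => [[? ?] ?]; case: q => [[? ?] ?]; rewrite /t0 /t1 /t2 /= => -> -> ->. Qed.

Lemma mink_lift1 s xi : mink (lift1 xi) s = - t0 s + t1 s * xi.1 + t2 s * xi.2.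
Proof. rewrite /mink /lift1 /t0 /t1 /t2 /=; ring. Qed.

Definition sigma_of_affine c : R * R * R := ((- t0 c, t1 c), t2 c).

Lemma mink_sigma_of_affine c xi : mink (lift1 xi) (sigma_of_affine c) = affine_ev c xi.
Proof. rewrite mink_lift1 /affine_ev /t0 /t1 /t2 /=; ring. Qed.

Lemma mink_comb3 t p q xi :
  mink (lift1 xi) (comb3 t p q) = (1 - t) * mink (lift1 xi) p + t * mink (lift1 xi) q.
Proof. rewrite !mink_lift1 /comb3 /t0 /t1 /t2 /=; ring. Qed.

Lemma comb3_id t p : comb3 t p p = p.
Proof. by apply: triple_eq; rewrite /comb3 /t0 /t1 /t2 /=; ring. Qed.

Lemma comb3_comb3 (u a b : R) p q :
  comb3 u (comb3 a p q) (comb3 b p q) = comb3 ((1 - u) * a + u * b) p q.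
Proof. by apply: triple_eq; rewrite /comb3 /t0 /t1 /t2 /=; ring. Qed.

Lemma comb30 p q : comb3 0 p q = p.
Proof. by apply: triple_eq; rewrite /comb3 /t0 /t1 /t2 /=; ring. Qed.

Lemma midpt_segment3 p q : segment3 p q (midpt (segment3 p q)).
Proof.
have : is_midpoint_of (segment3 p q) (midpt (segment3 p q)).
  by apply: xgetPex; exists (comb3 (2^-1) p q), p, q.
move=> [p' [q' [-> ->]]]; exists (2^-1) => //=.
by rewrite invr_ge0 ler0n invr_le1 ?ler1n // unitfE.
Qed.

End Minkowski.

Lemma sup_halflines_mem {R : realType} {I : Type} (P : I -> Prop) (a b c : I -> R)
    (T : set R) : (forall t, T t <-> forall i, P i -> a i + b i * t <= c i) ->
  T !=set0 -> has_ubound T -> T (sup T).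
Proof.
move=> hT T0 hub; apply/hT => i Pi; have [t Tt] := T0.
have hle t' : T t' -> a i + b i * t' <= c i by move=> /hT; apply.
case: (lerP (b i) 0) => hb.
  have := hle t Tt; have := ub_le_sup hub Tt; nra.
have : sup T <= (c i - a i) / b i.
  by apply: ge_sup => // t' /hle h'; rewrite ler_pdivlMr //; lra.
by rewrite ler_pdivlMr // mulrC; lra.
Qed.

Lemma inf_halflines_mem {R : realType} {I : Type} (P : I -> Prop) (a b c : I -> R)
    (T : set R) : (forall t, T t <-> forall i, P i -> a i + b i * t <= c i) ->
  T !=set0 -> has_lbound T -> T (inf T).
Proof.
move=> hT T0 hlb; have hN t : (-%R @` T) t <-> forall i, P i -> a i + - b i * t <= c i.
  split => [[u Tu <-] i Pi|h]; first by rewrite mulrNN; exact: (hT u).1 Tu i Pi.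
  by exists (- t); [apply/hT => i Pi; rewrite mulrN -mulNr; apply: h | rewrite opprK].
have := sup_halflines_mem hN ((nonemptyN T).2 T0) ((has_lb_ubN T).1 hlb).
by move=> [u Tu]; rewrite /inf => <-; rewrite opprK.
Qed.

Section SupportVectors.
Variable R : realType.
Implicit Types (a b t : R) (w x z xi eta : R * R) (c p q s : R * R * R).
Variables (phi : R * R -> R) (m : R).
Hypothesis phi_ge : forall z, S1 z -> m <= phi z.
Local Notation pm := (phi_minus phi).
Local Notation Sig := (Sigma_minus phi).

Lemma Sigma_minus_mink s eta xi : Sig eta s ->
  mink (lift1 xi) s = pm eta + (t1 s * (xi.1 - eta.1) + t2 s * (xi.2 - eta.2)).
Proof. by move=> [_ <-]; rewrite !mink_lift1; ring. Qed.

Lemma Sigma_minus_subgrad s eta xi : Sig eta s -> D2 xi ->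
  t1 s * (xi.1 - eta.1) + t2 s * (xi.2 - eta.2) <= pm xi - pm eta.
Proof. by move=> hs hxi; have := hs.1 xi hxi; rewrite (Sigma_minus_mink _ hs); lra. Qed.

Definition slope_cap eta : R :=
  (`|pm (displace eta (margin eta) 0)| + `|pm (displace eta (- margin eta) 0)| +
   `|pm (displace eta 0 (margin eta))| + `|pm (displace eta 0 (- margin eta))| +
   `|pm eta| + 1) / margin eta.

Lemma slope_le_cap eta a1 a2 : D2 eta ->
  (forall xi, D2 xi -> a1 * (xi.1 - eta.1) + a2 * (xi.2 - eta.2) <= pm xi - pm eta + 1) ->
  `|a1| <= slope_cap eta /\ `|a2| <= slope_cap eta.
Proof.
move=> he h; rewrite /slope_cap; set r := margin eta; set M := (_ + 1).
have r0 : 0 < r by move: he; rewrite D2E /r /margin; lra.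
have at_cross a b : `|a| + `|b| = r -> `|pm (displace eta a b)| <= M - `|pm eta| - 1 ->
    a1 * a + a2 * b <= M.
  move=> hab hM; have hle : `|a| + `|b| <= margin eta by rewrite hab.
  have := h _ (D2_displace he hle).
  have -> : (displace eta a b).1 - eta.1 = a by rewrite /= addrAC subrr add0r.
  have -> : (displace eta a b).2 - eta.2 = b by rewrite /= addrAC subrr add0r.
  by have := ler_norm (pm (displace eta a b)); have := ler_norm (- pm eta); rewrite normrN; lra.
have n1 := normr_ge0 (pm (displace eta r 0)); have n2 := normr_ge0 (pm (displace eta (- r) 0)).
have n3 := normr_ge0 (pm (displace eta 0 r)); have n4 := normr_ge0 (pm (displace eta 0 (- r))).
have nr : `|r| = r by rewrite gtr0_norm.
have p1 : a1 * r <= M.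
  by have := at_cross r 0; rewrite nr normr0 addr0 mulr0 addr0; apply => //; rewrite /M; lra.
have p2 : - a1 * r <= M.
  have := at_cross (- r) 0; rewrite normrN nr normr0 addr0 mulr0 addr0 mulrN -mulNr.
  by apply => //; rewrite /M; lra.
have p3 : a2 * r <= M.
  by have := at_cross 0 r; rewrite nr normr0 add0r mulr0 add0r; apply => //; rewrite /M; lra.
have p4 : - a2 * r <= M.
  have := at_cross 0 (- r); rewrite normrN nr normr0 add0r mulr0 add0r mulrN -mulNr.
  by apply => //; rewrite /M; lra.
by split; rewrite ler_pdivlMr // mulrC -[M]maxxx; apply: abs_slope_le.
Qed.

End SupportVectors.

Lemma affine_ev_continuous {R : realType} (xi : R * R) :
  continuous (fun c : R * R * R => affine_ev c xi).
Proof.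
move=> c; rewrite /affine_ev /t0 /t1 /t2.
apply: cvgD; first apply: cvgD.
- by apply: (@cvg_comp _ _ _ fst fst); exact: cvg_fst.
- by apply: cvgMl; apply: (@cvg_comp _ _ _ fst snd); [exact: cvg_fst | exact: cvg_snd].
- by apply: cvgMl; exact: cvg_snd.
Qed.

Lemma cluster_affine_ev {R : realType} (B : nat -> set (R * R * R)) p xi n e :
  (forall n U, nbhs p U -> (B n `&` U) !=set0) -> 0 < e ->
  exists c, B n c /\ `|affine_ev p xi - affine_ev c xi| < e.
Proof.
by move=> cp e0; have [c [Bc hc]] := cp n _ (@affine_ev_continuous _ xi p _ (nbhsx_ballx _ _ e0));
  exists c.
Qed.

Lemma exists_inv_nat_lt {R : realType} (e : R) : 0 < e -> exists n : nat, n.+1%:R^-1 < e.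
Proof.
move=> e0; have ie0 : 0 <= e^-1 by rewrite invr_ge0 ltW.
have := archi_boundP ie0; set n := Num.Def.archi_bound _ => hn.
exists n; rewrite -[e]invrK ltf_pV2 ?posrE ?invr_gt0 ?ltr0Sn //.
by apply: lt_le_trans hn _; rewrite ler_nat.
Qed.

Lemma sqr_le_of_abs_le {R : realType} (u v : R) : `|u| <= v -> u ^+ 2 <= v ^+ 2.
Proof.
move=> h; rewrite -real_normK ?num_real // lerXn2r ?nnegrE //.
exact: le_trans (normr_ge0 u) h.
Qed.

Lemma cramer_abs_le {R : realType} (a1 a2 b1 b2 d1 d2 M : R) :
  `|a1 * d1 + a2 * d2| <= M -> `|b1 * d1 + b2 * d2| <= M ->
  `|(a1 * b2 - a2 * b1) * d1| <= M * (`|a2| + `|b2|) /\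
  `|(a1 * b2 - a2 * b1) * d2| <= M * (`|a1| + `|b1|).
Proof.
move=> ha hb; split.
- have -> : (a1 * b2 - a2 * b1) * d1 = (a1 * d1 + a2 * d2) * b2 - (b1 * d1 + b2 * d2) * a2.
    by ring.
  apply: le_trans (ler_normB _ _) _; rewrite !normrM mulrDr addrC.
  by apply: lerD; apply: ler_wpM2r.
- have -> : (a1 * b2 - a2 * b1) * d2 = (b1 * d1 + b2 * d2) * a1 - (a1 * d1 + a2 * d2) * b1.
    by ring.
  apply: le_trans (ler_normB _ _) _; rewrite !normrM mulrDr.
  by apply: lerD; apply: ler_wpM2r.
Qed.

Lemma sqdist_lerp_ge {R : realType} (s : R) (z eta : R * R) : S1 z -> D2 eta -> 0 <= s <= 2^-1 ->
  (1 - sqnorm eta) ^+ 2 / 16 <=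
  ((lerp s z eta).1 - eta.1) ^+ 2 + ((lerp s z eta).2 - eta.2) ^+ 2.
Proof.
move=> hz he /andP[s0 s1]; have := sqdist_S1_ge hz (ltW he).
have -> : ((lerp s z eta).1 - eta.1) ^+ 2 + ((lerp s z eta).2 - eta.2) ^+ 2 =
  (1 - s) ^+ 2 * ((z.1 - eta.1) ^+ 2 + (z.2 - eta.2) ^+ 2) by rewrite /lerp /=; ring.
have := addr_ge0 (sqr_ge0 (z.1 - eta.1)) (sqr_ge0 (z.2 - eta.2)).
have : 1 / 4 <= (1 - s) ^+ 2 by nra.
nra.
Qed.

Section SupportExistence.
Variable R : realType.
Implicit Types (a b t : R) (w x z xi eta : R * R) (c p q s : R * R * R).
Variables (phi : R * R -> R) (m : R).
Hypothesis phi_ge : forall z, S1 z -> m <= phi z.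
Local Notation pm := (phi_minus phi).
Local Notation Sig := (Sigma_minus phi).

Lemma near_minorant_coef_bound c eta : D2 eta -> minorant phi c ->
  pm eta - 1 < affine_ev c eta ->
  [/\ `|t0 c| <= `|pm eta| + 1 + 2 * slope_cap phi eta,
      `|t1 c| <= slope_cap phi eta & `|t2 c| <= slope_cap phi eta].
Proof.
move=> he hc hce; set K := slope_cap phi eta.
have [k1 k2] : `|t1 c| <= K /\ `|t2 c| <= K.
  apply: slope_le_cap => // xi hxi; have := phi_minus_ge phi_ge hxi hc.
  have -> : t1 c * (xi.1 - eta.1) + t2 c * (xi.2 - eta.2) =
    affine_ev c xi - affine_ev c eta by rewrite /affine_ev; ring.
  lra.
have ae : `|affine_ev c eta| <= `|pm eta| + 1.
  have := phi_minus_ge phi_ge he hc; have := ler_norm (pm eta).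
  have := ler_norm (- pm eta); rewrite normrN ler_norml; lra.
have [e1 e2] := abs_coord_D2 he.
have m1 : `|t1 c * eta.1| <= K by rewrite normrM -[K]mulr1 ler_pM.
have m2 : `|t2 c * eta.2| <= K by rewrite normrM -[K]mulr1 ler_pM.
split => //; have -> : t0 c = affine_ev c eta - t1 c * eta.1 - t2 c * eta.2.
  by rewrite /affine_ev; ring.
apply: le_trans (ler_normB _ _) _; apply: le_trans (lerD (ler_normB _ _) (lexx _)) _; lra.
Qed.

Lemma Sigma_minus_nonempty eta : D2 eta -> Sig eta !=set0.
Proof.
move=> he; set L := `|pm eta| + 1 + 2 * slope_cap phi eta.
pose B n := [set c | minorant phi c /\ pm eta - n.+1%:R^-1 < affine_ev c eta].
have inv_le1 n : n.+1%:R^-1 <= 1 :> R by rewrite invr_le1 ?ler1n ?unitfE ?pnatr_eq0.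
have ne n : B n !=set0.
  have n0 : 0 < n.+1%:R^-1 :> R by rewrite invr_gt0 ltr0Sn.
  by have [c hc hce] := minorant_near_phi_minus phi_ge he n0; exists c.
have box a : `|a| <= L -> `[-L, L]%classic a by rewrite /= in_itv /= -ler_norml.
have sub n : B n `<=` `[-L, L]%classic `*` `[-L, L]%classic `*` `[-L, L]%classic.
  move=> c [hc hce]; have [h0 h1 h2] := near_minorant_coef_bound he hc
    (le_lt_trans (lerB (lexx _) (inv_le1 n)) hce).
  have K0 : 0 <= slope_cap phi eta by apply: le_trans h1.
  have := normr_ge0 (pm eta).
  by split; [split|]; apply: box; rewrite /L; lra.
have nest n : B n.+1 `<=` B n.
  move=> c [hc hce]; split => //; apply: le_lt_trans hce.
  by rewrite lerB // lef_pV2 ?posrE ?ltr0Sn // ler_nat.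
have cL := @segment_compact R (- L) L.
have [p _ cp] := compact_nested_cluster (compact_setX (compact_setX cL cL) cL) ne sub nest.
have le_pm xi : D2 xi -> affine_ev p xi <= pm xi.
  move=> hxi; rewrite leNgt; apply/negP => hlt.
  have e0 : 0 < affine_ev p xi - pm xi by rewrite subr_gt0.
  have [c [[hc _] hpc]] := cluster_affine_ev xi 0 cp e0.
  by have := phi_minus_ge phi_ge hxi hc; have := ler_norm (affine_ev p xi - affine_ev c xi); lra.
exists (sigma_of_affine p); split => [xi hxi|]; rewrite mink_sigma_of_affine; first exact: le_pm.
apply/eqP; rewrite eq_le le_pm //=; rewrite leNgt; apply/negP => hlt.
have e0 : 0 < (pm eta - affine_ev p eta) / 2 by rewrite divr_gt0 // subr_gt0.
have [n hn] := exists_inv_nat_lt e0.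
have [c [[_ hce] hpc]] := cluster_affine_ev eta n cp e0.
rewrite distrC in hpc; have := le_lt_trans (ler_norm _) hpc.
set ac := affine_ev c eta in hce *; set ap := affine_ev p eta in hn *.
set k := (n.+1%:R)^-1 in hn hce; lra.
Qed.

End SupportExistence.

Section SupportSegment.
Variable R : realType.
Implicit Types (a b t : R) (w x z xi eta : R * R) (c p q s : R * R * R).
Variables (phi : R * R -> R) (m : R).
Hypothesis phi_ge : forall z, S1 z -> m <= phi z.
Local Notation pm := (phi_minus phi).
Local Notation Sig := (Sigma_minus phi).

Definition slope_det s0 s1 s2 : R :=
  (t1 s1 - t1 s0) * (t2 s2 - t2 s0) - (t2 s1 - t2 s0) * (t1 s2 - t1 s0).
Definition slope_spread s0 s1 s2 : R :=
  `|t1 s1 - t1 s0| + `|t2 s1 - t2 s0| + `|t1 s2 - t1 s0| + `|t2 s2 - t2 s0|.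
Definition mean_slope s0 s1 s2 : R * R :=
  ((t1 s0 + t1 s1 + t1 s2) / 3, (t2 s0 + t2 s1 + t2 s2) / 3).

Lemma Sigma_minus_spread eta s0 s1 s2 xi dl : Sig eta s0 -> Sig eta s1 -> Sig eta s2 ->
  D2 xi -> 0 <= dl ->
  9 * (dl * slope_spread s0 s1 s2) ^+ 2 <
    slope_det s0 s1 s2 ^+ 2 * ((xi.1 - eta.1) ^+ 2 + (xi.2 - eta.2) ^+ 2) ->
  pm eta + ((mean_slope s0 s1 s2).1 * (xi.1 - eta.1) +
            (mean_slope s0 s1 s2).2 * (xi.2 - eta.2)) + dl <= pm xi.
Proof.
move=> h0 h1 h2 hxi dl0; rewrite /slope_spread /slope_det /mean_slope /=.
set d1 := xi.1 - eta.1; set d2 := xi.2 - eta.2 => hD.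
have := Sigma_minus_subgrad h0 hxi; have := Sigma_minus_subgrad h1 hxi.
have := Sigma_minus_subgrad h2 hxi; rewrite -/d1 -/d2.
set x0 := t1 s0 * d1 + t2 s0 * d2; set x1 := t1 s1 * d1 + t2 s1 * d2.
set x2 := t1 s2 * d1 + t2 s2 * d2 => A2 A1 A0.
have -> : (t1 s0 + t1 s1 + t1 s2) / 3 * d1 + (t2 s0 + t2 s1 + t2 s2) / 3 * d2 =
  (x0 + x1 + x2) / 3 by rewrite /x0 /x1 /x2; field.
rewrite leNgt; apply/negP => hlt.
have y1 : `|(t1 s1 - t1 s0) * d1 + (t2 s1 - t2 s0) * d2| <= 3 * dl.
  have -> : (t1 s1 - t1 s0) * d1 + (t2 s1 - t2 s0) * d2 = x1 - x0 by rewrite /x0 /x1; ring.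
  by rewrite ler_norml; apply/andP; split; lra.
have y2 : `|(t1 s2 - t1 s0) * d1 + (t2 s2 - t2 s0) * d2| <= 3 * dl.
  have -> : (t1 s2 - t1 s0) * d1 + (t2 s2 - t2 s0) * d2 = x2 - x0 by rewrite /x0 /x2; ring.
  by rewrite ler_norml; apply/andP; split; lra.
have [/sqr_le_of_abs_le k1 /sqr_le_of_abs_le k2] := cramer_abs_le y1 y2.
set D := _ * _ - _ * _ in hD k1 k2.
set u := `|t2 s1 - t2 s0| + `|t2 s2 - t2 s0| in k1.
set v := `|t1 s1 - t1 s0| + `|t1 s2 - t1 s0| in k2.
have eC : `|t1 s1 - t1 s0| + `|t2 s1 - t2 s0| + `|t1 s2 - t1 s0| + `|t2 s2 - t2 s0| = u + v.
  by rewrite /u /v; ring.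
rewrite eC in hD.
have uv : 0 <= dl ^+ 2 * u * v by rewrite !mulr_ge0 ?sqr_ge0 ?addr_ge0.
have : (3 * dl * u) ^+ 2 + (3 * dl * v) ^+ 2 <= 9 * (dl * (u + v)) ^+ 2 by nra.
have : D ^+ 2 * (d1 ^+ 2 + d2 ^+ 2) = (D * d1) ^+ 2 + (D * d2) ^+ 2 by ring.
lra.
Qed.

Lemma Sigma_minus_collinear eta s0 s1 s2 : D2 eta ->
  Sig eta s0 -> Sig eta s1 -> Sig eta s2 -> slope_det s0 s1 s2 = 0.
Proof.
move=> he h0 h1 h2; apply/eqP; apply: contraT => hD.
set D := slope_det s0 s1 s2 in hD; set C := slope_spread s0 s1 s2.
set tau := (1 - sqnorm eta) ^+ 2 / 16.
have tau0 : 0 < tau by apply: divr_gt0 => //; apply: exprn_gt0; rewrite subr_gt0.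
have C0 : 0 <= C by rewrite /C !addr_ge0.
have D0 : 0 < D ^+ 2 by rewrite lt_def sqr_ge0 andbT sqrf_eq0.
set Q := D ^+ 2 * tau / (9 * (C + 1) ^+ 2).
have C1 : 0 < (C + 1) ^+ 2 by rewrite exprn_gt0 //; lra.
have Q0 : 0 < Q by apply: divr_gt0; apply: mulr_gt0.
have hQ : 9 * (Q * (C + 1) ^+ 2) = D ^+ 2 * tau.
  by rewrite mulrCA divfK // gt_eqF // mulr_gt0.
set dl := Num.min 1 Q.
have dl0 : 0 < dl by rewrite lt_min ltr01.
have dlQ : dl ^+ 2 <= Q.
  have dl1 : dl <= 1 by rewrite ge_min lexx.
  rewrite expr2; apply: le_trans (ler_wpM2l (ltW dl0) dl1) _.
  by rewrite mulr1 ge_min lexx orbT.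
have key : 9 * (dl * C) ^+ 2 < D ^+ 2 * tau.
  have k1 : dl ^+ 2 * C ^+ 2 <= Q * C ^+ 2 by apply: ler_wpM2r; first exact: sqr_ge0.
  have k2 : Q * C ^+ 2 < Q * (C + 1) ^+ 2 by rewrite ltr_pM2l //; nra.
  by rewrite exprMn -hQ; lra.
set g := mean_slope s0 s1 s2.
set b := ((pm eta - g.1 * eta.1 - g.2 * eta.2 + dl, g.1), g.2).
have affb xi : affine_ev b xi = pm eta + (g.1 * (xi.1 - eta.1) + g.2 * (xi.2 - eta.2)) + dl.
  by rewrite /affine_ev /b /t0 /t1 /t2 /=; ring.
have : minorant phi b.
  move=> z hz; apply: (minorant_of_radial phi_ge hz he) => s sp s_half.
  have s01 : 0 <= s <= 2^-1 by rewrite s_half ltW.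
  have s1' : 0 < s <= 1.
    by rewrite sp; apply: le_trans s_half _; rewrite invr_le1 ?ler1n // unitfE.
  rewrite affb; apply: (Sigma_minus_spread h0 h1 h2 (D2_lerp hz he s1') (ltW dl0)).
  apply: lt_le_trans key _; apply: ler_wpM2l; first exact: sqr_ge0.
  exact: sqdist_lerp_ge.
move=> /(phi_minus_ge phi_ge he); rewrite affb !subrr !mulr0 !addr0; lra.
Qed.

Lemma Sigma_minus_eq eta s s' : Sig eta s -> mink (lift1 eta) s' = pm eta ->
  t1 s = t1 s' -> t2 s = t2 s' -> s = s'.
Proof.
move=> [_ h] h' e1 e2; apply: triple_eq => //.
by move: h h'; rewrite !mink_lift1 e1 e2 => <-; lra.
Qed.

Lemma Sigma_minus_comb3 eta s s' t : Sig eta s -> Sig eta s' -> 0 <= t <= 1 ->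
  Sig eta (comb3 t s s').
Proof.
move=> [h1 e1] [h2 e2] /andP[t0 t1]; split; last by rewrite mink_comb3 e1 e2; ring.
by move=> xi hxi; rewrite mink_comb3; have := h1 xi hxi; have := h2 xi hxi; nra.
Qed.

Lemma Sigma_minus_slope_le eta s : D2 eta -> Sig eta s ->
  `|t1 s| <= slope_cap phi eta /\ `|t2 s| <= slope_cap phi eta.
Proof.
by move=> he hs; apply: slope_le_cap => // xi hxi; have := Sigma_minus_subgrad hs hxi; lra.
Qed.

Lemma Sigma_minus_slopes_neq eta s0 s1 : Sig eta s0 -> Sig eta s1 -> s1 <> s0 ->
  0 < (t1 s1 - t1 s0) ^+ 2 + (t2 s1 - t2 s0) ^+ 2.
Proof.
move=> h0 h1 ne; rewrite lt_def addr_ge0 ?sqr_ge0 // andbT; apply/negP => /eqP hnd.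
have sq0 u v : u ^+ 2 + v ^+ 2 = 0 -> u = 0 :> R.
  by move=> huv; apply/eqP; rewrite -sqrf_eq0 eq_le sqr_ge0 andbT; have := sqr_ge0 v; lra.
apply: ne; apply: Sigma_minus_eq h1 h0.2 _ _; apply/eqP; rewrite -subr_eq0; apply/eqP.
  exact: sq0 hnd.
by apply: sq0 (t1 s1 - t1 s0) _; rewrite addrC.
Qed.

Lemma Sigma_minus_on_line eta s0 s1 s : D2 eta -> Sig eta s0 -> Sig eta s1 -> s1 <> s0 ->
  Sig eta s -> exists t, s = comb3 t s0 s1.
Proof.
move=> he h0 h1 ne hs.
have nd0 := Sigma_minus_slopes_neq h0 h1 ne.
set dg1 := t1 s1 - t1 s0 in nd0; set dg2 := t2 s1 - t2 s0 in nd0.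
set a := t1 s - t1 s0; set b := t2 s - t2 s0.
have det : dg1 * b - dg2 * a = 0 := Sigma_minus_collinear he h0 h1 hs.
set t := (a * dg1 + b * dg2) / (dg1 ^+ 2 + dg2 ^+ 2).
have nd_neq0 := lt0r_neq0 nd0.
have k1 : t * dg1 = a.
  apply: (mulIf nd_neq0); rewrite mulrAC divfK //.
  transitivity (a * (dg1 ^+ 2 + dg2 ^+ 2) + dg2 * (dg1 * b - dg2 * a)); first ring.
  by rewrite det mulr0 addr0.
have k2 : t * dg2 = b.
  apply: (mulIf nd_neq0); rewrite mulrAC divfK //.
  transitivity (b * (dg1 ^+ 2 + dg2 ^+ 2) - dg1 * (dg1 * b - dg2 * a)); first ring.
  by rewrite det mulr0 subr0.
exists t; apply: Sigma_minus_eq hs _ _ _.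
- by rewrite mink_comb3 h0.2 h1.2; ring.
- have -> : t1 (comb3 t s0 s1) = t1 s0 + t * dg1 by rewrite /comb3 /t1 /dg1 /=; ring.
  by rewrite k1 /a; ring.
- have -> : t2 (comb3 t s0 s1) = t2 s0 + t * dg2 by rewrite /comb3 /t2 /dg2 /=; ring.
  by rewrite k2 /b; ring.
Qed.

Lemma Sigma_minus_line_bounded eta s0 s1 : D2 eta -> Sig eta s0 -> Sig eta s1 ->
  s1 <> s0 -> exists B, forall t, Sig eta (comb3 t s0 s1) -> `|t| <= B.
Proof.
move=> he h0 h1 ne; have nd0 := Sigma_minus_slopes_neq h0 h1 ne.
set dg1 := t1 s1 - t1 s0 in nd0 *; set dg2 := t2 s1 - t2 s0 in nd0 *.
set K := slope_cap phi eta; have [k01 k02] := Sigma_minus_slope_le he h0; rewrite -/K in k01 k02.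
exists (2 * K * (`|dg1| + `|dg2|) / (dg1 ^+ 2 + dg2 ^+ 2)) => t ht.
have [k1 k2] := Sigma_minus_slope_le he ht; rewrite -/K in k1 k2.
have u1 : `|t * dg1| <= 2 * K.
  have -> : t * dg1 = t1 (comb3 t s0 s1) - t1 s0 by rewrite /comb3 /t1 /dg1 /=; ring.
  by apply: le_trans (ler_normB _ _) _; lra.
have u2 : `|t * dg2| <= 2 * K.
  have -> : t * dg2 = t2 (comb3 t s0 s1) - t2 s0 by rewrite /comb3 /t2 /dg2 /=; ring.
  by apply: le_trans (ler_normB _ _) _; lra.
have e : `|t| * (dg1 ^+ 2 + dg2 ^+ 2) = `|t * dg1| * `|dg1| + `|t * dg2| * `|dg2|.
  by rewrite !normrM -[dg1 ^+ 2]real_normK ?num_real // -[dg2 ^+ 2]real_normK ?num_real //; ring.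
rewrite ler_pdivlMr // e.
have := ler_wpM2r (normr_ge0 dg1) u1; have := ler_wpM2r (normr_ge0 dg2) u2; lra.
Qed.

Lemma Sigma_minus_segment eta : D2 eta -> exists p q, Sig eta = segment3 p q.
Proof.
move=> he; have [s0 h0] := Sigma_minus_nonempty phi_ge he.
have [[s1 [h1 ne]]|single] := pselect (exists s1, Sig eta s1 /\ s1 <> s0); last first.
  exists s0, s0; apply/seteqP; split => [s hs|_ [t _ <-]]; last by rewrite comb3_id.
  have -> : s = s0 by apply: contrapT => hn; apply: single; exists s.
  by exists 0; [rewrite /= lexx ler01 | exact: comb3_id].
pose T := [set t | Sig eta (comb3 t s0 s1)].
have hT t : T t <-> forall xi, D2 xi ->
    mink (lift1 xi) s0 + (mink (lift1 xi) s1 - mink (lift1 xi) s0) * t <= pm xi.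
  have e xi : mink (lift1 xi) (comb3 t s0 s1) =
      mink (lift1 xi) s0 + (mink (lift1 xi) s1 - mink (lift1 xi) s0) * t.
    by rewrite mink_comb3; ring.
  split => [[ht _] xi hxi | ht]; first by rewrite -e; exact: ht.
  by split => [xi hxi|]; rewrite e ?ht // h0.2 h1.2; ring.
have T0 : T !=set0 by exists 0; rewrite /T /= comb30.
have [B hB] := Sigma_minus_line_bounded he h0 h1 ne.
have hub : has_ubound T by exists B => t /hB; apply: le_trans (ler_norm t).
have hlb : has_lbound T.
  by exists (- B) => t /hB ht; rewrite lerNl; apply: le_trans ht; rewrite -normrN ler_norm.
have Tsup := sup_halflines_mem (P := @D2 R) (c := pm) hT T0 hub.
have Tinf := inf_halflines_mem (P := @D2 R) (c := pm) hT T0 hlb.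
exists (comb3 (inf T) s0 s1), (comb3 (sup T) s0 s1).
apply/seteqP; split => [s hs|_ [u hu <-]]; last first.
  exact: Sigma_minus_comb3 Tinf Tsup hu.
have [t et] := Sigma_minus_on_line he h0 h1 ne hs.
have ht : T t by rewrite /T /= -et.
have hat := ge_inf hlb ht; have htb := ub_le_sup hub ht.
case: (lerP (sup T) (inf T)) => hab.
  exists 0; first by rewrite /= lexx ler01.
  by rewrite comb30 et; congr comb3; apply/eqP; rewrite eq_le hat (le_trans htb hab).
exists ((t - inf T) / (sup T - inf T)).
  apply/andP; split; first by apply: divr_ge0; rewrite subr_ge0 // ltW.
  by rewrite ler_pdivrMr ?subr_gt0 // mul1r lerD2r.
by rewrite comb3_comb3 et; congr comb3; field; rewrite subr_eq0 gt_eqF.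
Qed.

End SupportSegment.

Lemma abs_le_of_sqr_le {R : realType} (a t : R) : 0 <= t -> a ^+ 2 <= t ^+ 2 -> `|a| <= t.
Proof. by move=> t0 h; rewrite -(ler_pXn2r (n := 2)) ?nnegrE // real_normK ?num_real. Qed.

Section Estimates.
Variable R : realType.
Implicit Types (a b h s e : R) (w x y z xi eta : R * R) (c sg : R * R * R).

Definition Evec eta sg : R * R :=
  (- eta.2 * mink (lift1 eta) sg - (1 - sqnorm eta) * t2 sg,
   eta.1 * mink (lift1 eta) sg + (1 - sqnorm eta) * t1 sg).

Lemma dPi_mcross_lift1 eta sg : dPi (lift1 eta) (mcross (lift1 eta) sg) = Evec eta sg.
Proof.
rewrite /dPi /mcross /lift1 /Evec /mink /sqnorm /t0 /t1 /t2 /= !divr1 expr1n !divr1.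
by congr (_, _); ring.
Qed.

Lemma Evec_close (phi : R * R -> R) z eta sg e : S1 z ->
  `|eta.1 - z.1| * `|mink (lift1 eta) sg| <= e / 4 ->
  `|eta.2 - z.2| * `|mink (lift1 eta) sg| <= e / 4 ->
  `|mink (lift1 eta) sg - phi z| <= e / 4 ->
  `|(1 - sqnorm eta) * t1 sg| < e / 4 -> `|(1 - sqnorm eta) * t2 sg| < e / 4 ->
  ball (Xf phi z) e (Evec eta sg).
Proof.
move=> hz u1 u2 v g1 g2; have [z1 z2] := abs_coord_S1 hz; apply/ball2E.
have := normr_ge0 ((1 - sqnorm eta) * t1 sg); rewrite /Evec /Xf /=.
set M := mink (lift1 eta) sg in u1 u2 v *.
have w1 : `|z.1| * `|M - phi z| <= e / 4 by rewrite -[e / 4]mul1r ler_pM.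
have w2 : `|z.2| * `|M - phi z| <= e / 4 by rewrite -[e / 4]mul1r ler_pM.
move=> n0; split.
- have -> : - eta.2 * M - (1 - sqnorm eta) * t2 sg - - z.2 * phi z =
      - ((eta.2 - z.2) * M + z.2 * (M - phi z) + (1 - sqnorm eta) * t2 sg) by ring.
  rewrite normrN; apply: le_lt_trans (ler_normD _ _) _.
  apply: le_lt_trans (lerD (ler_normD _ _) (lexx _)) _.
  rewrite (normrM (eta.2 - z.2)) (normrM z.2); lra.
- have -> : eta.1 * M + (1 - sqnorm eta) * t1 sg - z.1 * phi z =
      (eta.1 - z.1) * M + z.1 * (M - phi z) + (1 - sqnorm eta) * t1 sg by ring.
  apply: le_lt_trans (ler_normD _ _) _.
  apply: le_lt_trans (lerD (ler_normD _ _) (lexx _)) _.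
  rewrite (normrM (eta.1 - z.1)) (normrM z.1); lra.
Qed.

Variable phi : R * R -> R.
Local Notation pm := (phi_minus phi).
Local Notation Sig := (Sigma_minus phi).

Lemma Sigma_minus_slope_small xi sg h (v : R) e : Sig xi sg -> 0 < h -> `|pm xi - v| < e ->
  (forall a b, `|a| + `|b| = h -> a * b = 0 ->
     D2 (displace xi a b) /\ `|pm (displace xi a b) - v| < e) ->
  h * `|t1 sg| < 2 * e /\ h * `|t2 sg| < 2 * e.
Proof.
move=> hs h0 hxi hcross.
have slope a b : `|a| + `|b| = h -> a * b = 0 -> t1 sg * a + t2 sg * b < 2 * e.
  move=> hab ab; have [hD hc] := hcross a b hab ab.
  have := Sigma_minus_subgrad hs hD.
  have -> : (displace xi a b).1 - xi.1 = a by rewrite /= addrAC subrr add0r.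
  have -> : (displace xi a b).2 - xi.2 = b by rewrite /= addrAC subrr add0r.
  by move: hxi hc; rewrite !ltr_norml => /andP[? ?] /andP[? ?]; lra.
have nh : `|h| = h by rewrite gtr0_norm.
have nNh : `|- h| = h by rewrite normrN.
have := slope h 0; have := slope (- h) 0; have := slope 0 h; have := slope 0 (- h).
rewrite nh nNh normr0 addr0 add0r !mulr0 !mul0r !addr0 !add0r !mulrN => s4 s3 s2 s1.
have := s1 erefl erefl; have := s2 erefl erefl; have := s3 erefl erefl.
have := s4 erefl erefl; rewrite -nh -!normrM !ltr_norml => ? ? ? ?.
by split; apply/andP; split; lra.
Qed.

Variable m : R.
Hypothesis phi_ge : forall z, S1 z -> m <= phi z.

Lemma phi_minus_upper_cont z e : S1 z -> cont_at phi z -> 0 < e ->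
  exists2 rho, 0 < rho & forall xi, D2 xi -> ball z rho xi -> pm xi < phi z + e.
Proof.
move=> hz hc e0; have [r r0 hr] := hc e e0.
set rho := Num.min (r / 4) (r ^+ 2 / 64).
have rho0 : 0 < rho by rewrite lt_min !divr_gt0 ?exprn_gt0.
have rho1 : rho <= r / 4 by rewrite ge_min lexx.
have rho2 : 4 * rho <= (r / 4) ^+ 2.
  have -> : (r / 4) ^+ 2 = 4 * (r ^+ 2 / 64) by field.
  by rewrite ler_pM2l // ge_min lexx orbT.
exists rho => // xi hxi hb.
have [w [w' [hw hw' exi ed]]] := midchord hxi.
have dl := one_sub_sqnorm_le hz hxi hb.
move/ball2E: hb => [h1 h2].
have r4 : 0 <= r / 4 by rewrite divr_ge0 // ltW.
have q1 : `|w.1 - xi.1| <= r / 4.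
  by apply: abs_le_of_sqr_le => //; have := sqr_ge0 (w.2 - xi.2); lra.
have q2 : `|w.2 - xi.2| <= r / 4.
  by apply: abs_le_of_sqr_le => //; have := sqr_ge0 (w.1 - xi.1); lra.
have near_z u u0 v : `|u - v| <= r / 4 -> `|v - u0| < rho -> `|u - u0| < r.
  by move=> huv hv; rewrite -(subrKA v); apply: le_lt_trans (ler_normD _ _) _; lra.
have e1 : w'.1 - xi.1 = - (w.1 - xi.1) by rewrite exi /=; field.
have e2 : w'.2 - xi.2 = - (w.2 - xi.2) by rewrite exi /=; field.
have bw : ball z r w by apply/ball2E; split; [exact: near_z q1 h1 | exact: near_z q2 h2].
have bw' : ball z r w'.
  by apply/ball2E; split; [apply: near_z _ h1 | apply: near_z _ h2]; rewrite ?e1 ?e2 normrN.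
have := hr w hw bw; have := hr w' hw' bw'; have := phi_minus_le_mid phi_ge hw hw'.
rewrite -exi; have := ler_norm (phi w - phi z); have := ler_norm (phi w' - phi z); lra.
Qed.

End Estimates.

Section Convergence.
Variable R : realType.
Implicit Types (a b h s e : R) (w x y z xi eta : R * R) (sg : R * R * R).
Variables (phi : R * R -> R) (m : R).
Hypothesis phi_ge : forall z, S1 z -> m <= phi z.
Local Notation pm := (phi_minus phi).
Local Notation Sig := (Sigma_minus phi).

Lemma phi_minus_cvg_cont z e : S1 z -> cont_at phi z -> 0 < e ->
  exists2 rho, 0 < rho & forall xi, D2 xi -> ball z rho xi -> `|pm xi - phi z| < e.
Proof.
move=> hz hc e0.
have [ra ra0 hra] := phi_minus_lower phi_ge hz (lsc_at_cont_at hc) e0.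
have [rb rb0 hrb] := phi_minus_upper_cont phi_ge hz hc e0.
exists (Num.min ra rb) => [|xi hxi hb]; first by rewrite lt_min ra0.
have hba : ball z ra xi by apply: le_ball hb; rewrite ge_min lexx.
have hbb : ball z rb xi by apply: le_ball hb; rewrite ge_min lexx orbT.
have := hra xi hxi hba; have := hrb xi hxi hbb.
by rewrite ltr_norml => ? ?; apply/andP; split; lra.
Qed.

Lemma phi_minus_lerp_close z e M : S1 z -> lsc_at phi z -> 0 < e ->
  exists2 s0, 0 < s0 & forall s y, 0 < s -> s < s0 -> D2 y ->
    `|pm y - phi z| <= M -> `|pm (lerp s z y) - phi z| < e.
Proof.
move=> hz hl e0; have [ra ra0 hra] := phi_minus_lower phi_ge hz hl e0.
have M1 : 0 < `|M| + 1 by have := normr_ge0 M; lra.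
exists (Num.min 1 (Num.min (ra / 2) (e / (`|M| + 1)))) => [|s y s0 ss hy hM].
  by rewrite !lt_min ltr01 !divr_gt0.
move: ss; rewrite !lt_min => /and3P[s1 s2]; rewrite ltr_pdivlMr // => s3.
have hs : D2 (lerp s z y) by apply: D2_lerp => //; rewrite s0 ltW.
have hb : ball z ra (lerp s z y).
  by apply/ball2E; have [c1 c2] := lerp_near hz hy (ltW s0); split; lra.
have := hra _ hs hb.
have : s * (pm y - phi z) <= s * (`|M| + 1).
  by apply: ler_wpM2l; [lra | have := ler_norm (pm y - phi z); have := ler_norm M; lra].
have s01 : 0 <= s <= 1 by rewrite !ltW.
have := phi_minus_lerp phi_ge hz hy s01.
by rewrite ltr_norml => ? ? ?; apply/andP; split; nra.
Qed.

Lemma Sigma_minus_cvg_cont z e : S1 z -> cont_at phi z -> 0 < e ->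
  exists2 rho, 0 < rho & forall xi sg, D2 xi -> ball z rho xi -> Sig xi sg ->
    ball (Xf phi z) e (Evec xi sg).
Proof.
move=> hz hc e0; set A := `|phi z| + 1.
have A0 : 0 < A by rewrite /A; have := normr_ge0 (phi z); lra.
set e1 := Num.min 1 (e / 32).
have e10 : 0 < e1 by rewrite lt_min ltr01 divr_gt0.
have e1e : e1 <= 1 /\ e1 <= e / 32 by rewrite !ge_min !lexx orbT.
have [r1 r10 hr1] := phi_minus_cvg_cont hz hc e10.
set rho := Num.min (r1 / 2) (e / (4 * A)).
exists rho => [|xi sg hxi hb hs]; first by rewrite lt_min !divr_gt0 ?mulr_gt0.
have rh1 : rho <= r1 / 2 by rewrite ge_min lexx.
have rhA : rho * A <= e / 4.
  have : rho * (4 * A) <= e by rewrite -ler_pdivlMr ?mulr_gt0 // ge_min lexx orbT.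
  lra.
have h0 : 0 < margin xi by move: hxi; rewrite D2E /margin; lra.
have hrho : margin xi <= rho by have := one_sub_sqnorm_le hz hxi hb; rewrite /margin; lra.
move/ball2E: (hb) => [b1 b2].
have cross a b : `|a| + `|b| = margin xi -> a * b = 0 ->
    D2 (displace xi a b) /\ `|pm (displace xi a b) - phi z| < e1.
  move=> hab _; have hD : D2 (displace xi a b) by apply: D2_displace hxi _; rewrite hab.
  split => //; apply: hr1 => //; apply/ball2E; rewrite /displace /=.
  have := normr_ge0 a; have := normr_ge0 b => ? ?.
  by split; rewrite addrAC; apply: le_lt_trans (ler_normD _ _) _; lra.
have hpm : `|pm xi - phi z| < e1 by apply: hr1 => //; apply: le_ball hb; lra.
have [g1 g2] := Sigma_minus_slope_small hs h0 hpm cross.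
have hd : 1 - sqnorm xi = 4 * margin xi by rewrite /margin; field.
have pmA : `|pm xi| <= A.
  by have := ler_normD (pm xi - phi z) (phi z); rewrite subrK /A; lra.
have n0 : 0 <= 1 - sqnorm xi by rewrite hd mulr_ge0 // ltW.
have G t : margin xi * `|t| < 2 * e1 -> `|(1 - sqnorm xi) * t| < e / 4.
  by rewrite normrM (ger0_norm n0) hd; lra.
have U1 : `|xi.1 - z.1| * `|pm xi| <= e / 4.
  by apply: le_trans rhA; apply: ler_pM => //; apply: ltW.
have U2 : `|xi.2 - z.2| * `|pm xi| <= e / 4.
  by apply: le_trans rhA; apply: ler_pM => //; apply: ltW.
have V : `|pm xi - phi z| <= e / 4 by lra.
by apply: Evec_close; rewrite ?hs.2 //; apply: G.
Qed.

Lemma phi_minus_radial_cross z x e : S1 z -> lsc_at phi z -> D2 x -> 0 < e ->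
  exists2 s1, 0 < s1 & forall s, 0 < s -> s < s1 -> s <= 1 ->
    `|pm (lerp s z x) - phi z| < e /\
    (forall a b, `|a| + `|b| = s * margin x -> a * b = 0 ->
       D2 (displace (lerp s z x) a b) /\ `|pm (displace (lerp s z x) a b) - phi z| < e).
Proof.
move=> hz hl hx e0; set k := margin x.
set M := `|pm x - phi z| + `|pm (displace x k 0) - phi z| +
  `|pm (displace x (- k) 0) - phi z| + `|pm (displace x 0 k) - phi z| +
  `|pm (displace x 0 (- k)) - phi z|.
have := normr_ge0 (pm x - phi z); have := normr_ge0 (pm (displace x k 0) - phi z).
have := normr_ge0 (pm (displace x (- k) 0) - phi z).
have := normr_ge0 (pm (displace x 0 k) - phi z).
have := normr_ge0 (pm (displace x 0 (- k)) - phi z) => n5 n4 n3 n2 n1.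
have M_x : `|pm x - phi z| <= M by rewrite /M; lra.
have M_ge a b : `|a| + `|b| = k -> a * b = 0 -> `|pm (displace x a b) - phi z| <= M.
  have pm_or (u : R) : `|u| = k -> u = k \/ u = - k.
    by case: (ger0P u) => _ <-; [left | right; rewrite opprK].
  move=> hab /eqP; rewrite mulf_eq0 => /orP[] /eqP abz;
    rewrite abz normr0 ?addr0 ?add0r in hab *.
  - by have [->|->] := pm_or b hab; rewrite /M; lra.
  - by have [->|->] := pm_or a hab; rewrite /M; lra.
have [s1 s10 hs1] := phi_minus_lerp_close M hz hl e0.
exists s1 => // s sp ss1 ss2; split => [|a b hab ab]; first exact: hs1.
have s_neq0 : s != 0 by rewrite gt_eqF.
have -> : displace (lerp s z x) a b = lerp s z (displace x (a / s) (b / s)).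
  by rewrite lerp_displace ![s * (_ / s)]mulrC !divfK.
have hab' : `|a / s| + `|b / s| = k.
  have si : 0 < s^-1 by rewrite invr_gt0.
  by rewrite !normrM (gtr0_norm si) -mulrDl hab mulrAC divff ?mul1r.
have ab' : a / s * (b / s) = 0 by rewrite mulrACA ab mul0r.
have hD : D2 (displace x (a / s) (b / s)) by apply: D2_displace hx _; rewrite hab'.
by split; [apply: D2_lerp; rewrite ?sp | apply: hs1 => //; exact: M_ge].
Qed.

Lemma Sigma_minus_cvg_radial z x e : S1 z -> lsc_at phi z -> D2 x -> 0 < e ->
  exists2 s0, 0 < s0 & forall s sg, 0 < s -> s < s0 -> Sig (lerp s z x) sg ->
    ball (Xf phi z) e (Evec (lerp s z x) sg).
Proof.
move=> hz hl hx e0; set k := margin x; set A := `|phi z| + 1.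
have A0 : 0 < A by rewrite /A; have := normr_ge0 (phi z); lra.
have k0 : 0 < k by move: hx; rewrite D2E /k /margin; lra.
have k1 : k <= 1 by have := sqnorm_ge0 x; rewrite /k /margin; lra.
set e1 := Num.min 1 (e * k / 40).
have e10 : 0 < e1 by rewrite lt_min ltr01 /=; apply: divr_gt0 => //; exact: mulr_gt0.
have e1e : e1 <= 1 /\ e1 <= e * k / 40 by rewrite !ge_min !lexx orbT.
have [s1 s10 hs1] := phi_minus_radial_cross hz hl hx e10.
exists (Num.min s1 (Num.min 1 (e / (8 * A)))) => [|s sg sp ss hsg].
  by rewrite !lt_min s10 ltr01 divr_gt0 ?mulr_gt0.
move: ss; rewrite !lt_min => /and3P[ss1 ss2]; rewrite ltr_pdivlMr ?mulr_gt0 // => ss3.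
have [hpm cross] := hs1 s sp ss1 (ltW ss2).
have [g1 g2] := Sigma_minus_slope_small hsg (mulr_gt0 sp k0) hpm cross.
set eta := lerp s z x in hpm hsg g1 g2 *.
have dl : 1 - sqnorm eta <= 5 * s by apply: one_sub_sqnorm_lerp; rewrite // !ltW.
have n0 : 0 <= 1 - sqnorm eta.
  by have := D2_lerp hz hx (_ : 0 < s <= 1); rewrite sp ltW // D2E -/eta => /(_ isT); lra.
have G t : s * k * `|t| < 2 * e1 -> `|(1 - sqnorm eta) * t| < e / 4.
  move=> ht; rewrite normrM (ger0_norm n0).
  have st : s * `|t| < e / 20 by rewrite -(ltr_pM2r k0); lra.
  by have := ler_wpM2r (normr_ge0 t) dl; lra.
have [c1 c2] := lerp_near hz hx (ltW sp).
have pmA : `|pm eta| <= A.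
  by have := ler_normD (pm eta - phi z) (phi z); rewrite subrK /A; lra.
have U1 : `|eta.1 - z.1| * `|pm eta| <= e / 4.
  by apply: le_trans (ler_pM _ _ c1 pmA) _ => //; lra.
have U2 : `|eta.2 - z.2| * `|pm eta| <= e / 4.
  by apply: le_trans (ler_pM _ _ c2 pmA) _ => //; lra.
have V : `|pm eta - phi z| <= e / 4.
  have : e * k <= e by rewrite -[leRHS]mulr1 ler_pM2l.
  lra.
by apply: Evec_close; rewrite ?hsg.2 //; apply: G.
Qed.

End Convergence.

Section Opposite.
Variable R : realType.
Implicit Types (xi eta z : R * R) (c p q s : R * R * R).

Definition neg3 s : R * R * R := ((- t0 s, - t1 s), - t2 s).

Lemma neg3K : involutive neg3.
Proof. by move=> s; apply: triple_eq; rewrite /neg3 /t0 /t1 /t2 /= opprK. Qed.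

Lemma affine_ev_neg3 c xi : affine_ev (neg3 c) xi = - affine_ev c xi.
Proof. rewrite /affine_ev /neg3 /t0 /t1 /t2 /=; ring. Qed.

Lemma mink_neg3 s xi : mink (lift1 xi) (neg3 s) = - mink (lift1 xi) s.
Proof. rewrite !mink_lift1 /neg3 /t0 /t1 /t2 /=; ring. Qed.

Lemma comb3_neg3 (t : R) p q : comb3 t (neg3 p) (neg3 q) = neg3 (comb3 t p q).
Proof. by apply: triple_eq; rewrite /comb3 /neg3 /t0 /t1 /t2 /=; ring. Qed.

Lemma Evec_neg3 eta s : Evec eta (neg3 s) = (- (Evec eta s).1, - (Evec eta s).2).
Proof. rewrite /Evec mink_neg3 /neg3 /t1 /t2 /=; congr (_, _); ring. Qed.

Lemma Xf_opp (phi : R * R -> R) z : Xf (fun w => - phi w) z = (- (Xf phi z).1, - (Xf phi z).2).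
Proof. rewrite /Xf /=; congr (_, _); ring. Qed.

Lemma ball_opp2 (p q : R * R) (e : R) : ball (- p.1, - p.2) e (- q.1, - q.2) <-> ball p e q.
Proof. by rewrite !ball2E /= -!opprD !normrN. Qed.

Variable phi : R * R -> R.
Local Notation psi := (fun w => - phi w).

Lemma phi_plus_opp eta : phi_plus phi eta = - phi_minus psi eta.
Proof.
rewrite /phi_plus /phi_minus /inf; congr (- sup _); apply/seteqP; split => y.
  move=> [y' [c [hc ->]] <-]; exists (neg3 c); split; last by rewrite affine_ev_neg3.
  by move=> z hz; rewrite affine_ev_neg3 lerN2; apply: hc.
move=> [c [hc ->]]; exists (affine_ev (neg3 c) eta); last by rewrite affine_ev_neg3 opprK.
by exists (neg3 c); split => // z hz; rewrite affine_ev_neg3 lerNr; exact: hc.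
Qed.

Lemma Sigma_plus_neg3 eta s : Sigma_plus phi eta s <-> Sigma_minus psi eta (neg3 s).
Proof.
rewrite /Sigma_plus /Sigma_minus /= mink_neg3 phi_plus_opp; split => -[h1 h2].
  by split; [move=> xi hxi; rewrite mink_neg3 lerNl -phi_plus_opp; apply: h1 | rewrite h2 opprK].
split; last by rewrite -h2 opprK.
by move=> xi hxi; rewrite phi_plus_opp lerNl -mink_neg3; apply: h1.
Qed.

Lemma Sigma_plus_segment eta : (exists p q, Sigma_minus psi eta = segment3 p q) ->
  exists p q, Sigma_plus phi eta = segment3 p q.
Proof.
move=> [p [q hpq]]; exists (neg3 p), (neg3 q); apply/seteqP; split => x.
  move=> /Sigma_plus_neg3; rewrite hpq => -[t ht htx]; exists t => //.
  by rewrite comb3_neg3 htx neg3K.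
by move=> [t ht <-]; apply/Sigma_plus_neg3; rewrite hpq comb3_neg3 neg3K; exists t.
Qed.

End Opposite.

Section Regularity.
Variable R : realType.
Variable phi : R * R -> R.
Implicit Types (w z : R * R).
Local Notation psi := (fun w => - phi w).

Lemma phi_Xf w : S1 w -> phi w = w.1 * (Xf phi w).2 - w.2 * (Xf phi w).1.
Proof. by rewrite S1E /sqnorm /Xf /= => hw; rewrite -[LHS]mul1r -hw; ring. Qed.

Lemma cont_at_of_continuous_Xf : {within @S1 R, continuous (Xf phi)} ->
  forall z, S1 z -> cont_at phi z.
Proof.
move=> H z hz e e0; set Y := Xf phi z.
have /cvg_ballP/(_ (e / 4)) := (subspace_continuousP _ _).1 H z hz.
have four : 0 < 4 :> R by [].
move=> /(_ (divr_gt0 e0 four)); rewrite near_withinE => /nbhs_ballP[r r0 hr].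
set N := `|Y.1| + `|Y.2| + 1.
have N0 : 0 < N by rewrite /N; have := normr_ge0 Y.1; have := normr_ge0 Y.2; lra.
exists (Num.min r (e / (4 * N))) => [|w hw hb]; first by rewrite lt_min r0 divr_gt0 ?mulr_gt0.
have hbr : ball z r w by apply: le_ball hb; rewrite ge_min lexx.
have /ball2E[y1 y2] := hr w hbr hw.
move/ball2E: hb; rewrite !lt_min => -[/andP[_ d1] /andP[_ d2]].
have [w1 w2] := abs_coord_S1 hw.
rewrite (phi_Xf hw) (phi_Xf hz) -/Y.
have -> : w.1 * (Xf phi w).2 - w.2 * (Xf phi w).1 - (z.1 * Y.2 - z.2 * Y.1) =
  w.1 * ((Xf phi w).2 - Y.2) + (w.1 - z.1) * Y.2 - (w.2 * ((Xf phi w).1 - Y.1) + (w.2 - z.2) * Y.1).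
  by ring.
have k1 : `|w.1 * ((Xf phi w).2 - Y.2)| <= e / 4 by rewrite normrM -[e / 4]mul1r ler_pM // ltW.
have k2 : `|w.2 * ((Xf phi w).1 - Y.1)| <= e / 4 by rewrite normrM -[e / 4]mul1r ler_pM // ltW.
have k3 : `|(w.1 - z.1) * Y.2| <= e / (4 * N) * `|Y.2|.
  by rewrite normrM ler_wpM2r // ltW.
have k4 : `|(w.2 - z.2) * Y.1| <= e / (4 * N) * `|Y.1|.
  by rewrite normrM ler_wpM2r // ltW.
have k5 : e / (4 * N) * `|Y.1| + e / (4 * N) * `|Y.2| <= e / 4.
  have -> : e / 4 = e / (4 * N) * N by field; rewrite gt_eqF.
  by rewrite -mulrDr ler_wpM2l ?divr_ge0 ?mulr_ge0 ?(ltW e0) ?(ltW N0) // /N; lra.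
apply: le_lt_trans (ler_normB _ _) _.
have := ler_normD (w.1 * ((Xf phi w).2 - Y.2)) ((w.1 - z.1) * Y.2).
have := ler_normD (w.2 * ((Xf phi w).1 - Y.1)) ((w.2 - z.2) * Y.1).
lra.
Qed.

Lemma cont_at_opp z : cont_at phi z -> cont_at psi z.
Proof.
move=> hc e e0; have [r r0 hr] := hc e e0; exists r => // w hw hb.
by rewrite -opprD normrN; apply: hr.
Qed.

Lemma lsc_at_of_lsc_on : lsc_on (@S1 R) phi -> forall z, S1 z -> lsc_at phi z.
Proof.
move=> hl z hz a ha; have := hl z hz a ha; rewrite near_withinE => /nbhs_ballP[r r0 hr].
by exists r => // w hw hb; apply: hr.
Qed.

Lemma lsc_at_opp_of_usc_on : usc_on (@S1 R) phi -> forall z, S1 z -> lsc_at psi z.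
Proof.
move=> hu z hz a ha; have := hu z hz (- a); rewrite ltrNr => /(_ ha).
rewrite near_withinE => /nbhs_ballP[r r0 hr].
by exists r => // w hw hb; rewrite ltrNr; apply: hr.
Qed.

End Regularity.

Section Extensions.
Variable R : realType.
Implicit Types (x z xi eta : R * R).

Lemma extends_continuously_of_ball (hX X : R * R -> R * R) :
  (forall z e, S1 z -> 0 < e -> exists2 rho, 0 < rho &
     forall xi, D2 xi -> ball z rho xi -> ball (X z) e (hX xi)) ->
  extends_continuously hX X.
Proof.
move=> H u z hD hz /cvg_ballP hu; apply/cvg_ballP => e e0.
have [rho r0 hr] := H z e hz e0.
by apply: filterS (hu rho r0) => n; exact: hr (hD n).
Qed.

Lemma extends_radially_of_ball (hX X : R * R -> R * R) :
  (forall z x e, S1 z -> D2 x -> 0 < e -> exists2 s0, 0 < s0 &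
     forall s, 0 < s -> s < s0 -> ball (X z) e (hX (lerp s z x))) ->
  extends_radially hX X.
Proof.
move=> H z x hz hx; apply/cvg_ballP => e e0.
have [s0 s00 hs] := H z x e hz hx e0.
apply/nbhs_ballP; exists s0 => // s hb sp.
by apply: hs => //; move: hb; rewrite /ball /= sub0r normrN gtr0_norm.
Qed.

Variable phi : R * R -> R.
Local Notation psi := (fun w => - phi w).

Lemma E_minus_Evec m eta : (forall z, S1 z -> m <= phi z) -> D2 eta ->
  exists2 s, Sigma_minus phi eta s & E_minus phi eta = Evec eta s.
Proof.
move=> hm he; have [p [q hpq]] := Sigma_minus_segment hm he.
exists (midpt (Sigma_minus phi eta)); last by rewrite /E_minus dPi_mcross_lift1.
by rewrite hpq; exact: midpt_segment3.
Qed.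

Lemma E_plus_Evec m eta : (forall z, S1 z -> m <= - phi z) -> D2 eta ->
  exists2 s, Sigma_minus psi eta s & E_plus phi eta = (- (Evec eta s).1, - (Evec eta s).2).
Proof.
move=> hm he; have [p [q hpq]] := Sigma_plus_segment (Sigma_minus_segment hm he).
set sp := midpt (Sigma_plus phi eta); exists (neg3 sp).
  by apply/Sigma_plus_neg3; rewrite /sp hpq; exact: midpt_segment3.
rewrite /E_plus dPi_mcross_lift1 -/sp Evec_neg3 /= !opprK; exact: surjective_pairing.
Qed.

Lemma Xf_opp_opp z : Xf phi z = (- (Xf psi z).1, - (Xf psi z).2).
Proof. rewrite Xf_opp /= !opprK; exact: surjective_pairing. Qed.

Lemma E_minus_ball_cont : (forall z, S1 z -> cont_at phi z) ->
  forall z e, S1 z -> 0 < e -> exists2 rho, 0 < rho &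
    forall xi, D2 xi -> ball z rho xi -> ball (Xf phi z) e (E_minus phi xi).
Proof.
move=> hc z e hz e0; have [m hm] := lsc_bounded_below (fun w hw => lsc_at_cont_at (hc w hw)).
have [rho r0 hr] := Sigma_minus_cvg_cont hm hz (hc z hz) e0.
by exists rho => // xi hxi hb; have [s hs ->] := E_minus_Evec hm hxi; exact: hr.
Qed.

Lemma E_plus_ball_cont : (forall z, S1 z -> cont_at phi z) ->
  forall z e, S1 z -> 0 < e -> exists2 rho, 0 < rho &
    forall xi, D2 xi -> ball z rho xi -> ball (Xf phi z) e (E_plus phi xi).
Proof.
move=> hc z e hz e0; have hc' w (hw : S1 w) := cont_at_opp (hc w hw).
have [m hm] := lsc_bounded_below (fun w hw => lsc_at_cont_at (hc' w hw)).
have [rho r0 hr] := Sigma_minus_cvg_cont hm hz (hc' z hz) e0.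
exists rho => // xi hxi hb; have [s hs ->] := E_plus_Evec hm hxi.
by rewrite Xf_opp_opp; apply/ball_opp2; exact: hr.
Qed.

Lemma E_minus_ball_radial : (forall z, S1 z -> lsc_at phi z) ->
  forall z x e, S1 z -> D2 x -> 0 < e -> exists2 s0, 0 < s0 &
    forall s, 0 < s -> s < s0 -> ball (Xf phi z) e (E_minus phi (lerp s z x)).
Proof.
move=> hl z x e hz hx e0; have [m hm] := lsc_bounded_below hl.
have [s0 s00 hs] := Sigma_minus_cvg_radial hm hz (hl z hz) hx e0.
exists (Num.min s0 1) => [|s sp]; first by rewrite lt_min s00 ltr01.
rewrite lt_min => /andP[ss0 ss1]; have s01 : 0 < s <= 1 by rewrite sp ltW.
by have [sg hsg ->] := E_minus_Evec hm (D2_lerp hz hx s01); exact: hs.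
Qed.

Lemma E_plus_ball_radial : (forall z, S1 z -> lsc_at psi z) ->
  forall z x e, S1 z -> D2 x -> 0 < e -> exists2 s0, 0 < s0 &
    forall s, 0 < s -> s < s0 -> ball (Xf phi z) e (E_plus phi (lerp s z x)).
Proof.
move=> hl z x e hz hx e0; have [m hm] := lsc_bounded_below hl.
have [s0 s00 hs] := Sigma_minus_cvg_radial hm hz (hl z hz) hx e0.
exists (Num.min s0 1) => [|s sp]; first by rewrite lt_min s00 ltr01.
rewrite lt_min => /andP[ss0 ss1]; have s01 : 0 < s <= 1 by rewrite sp ltW.
have [sg hsg ->] := E_plus_Evec hm (D2_lerp hz hx s01).
by rewrite Xf_opp_opp; apply/ball_opp2; exact: hs.
Qed.

End Extensions.

Unset Implicit Arguments.

Theorem proposition1p5 (R : realType) (phi : R * R -> R) :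
  ({within @S1 R, continuous (Xf phi)} ->
     extends_continuously (E_plus phi) (Xf phi) /\
     extends_continuously (E_minus phi) (Xf phi)) /\
  (lsc_on (@S1 R) phi -> extends_radially (E_minus phi) (Xf phi)) /\
  (usc_on (@S1 R) phi -> extends_radially (E_plus phi) (Xf phi)).
Proof.
split; [move=> /cont_at_of_continuous_Xf hc; split | split].
- exact/extends_continuously_of_ball/E_plus_ball_cont.
- exact/extends_continuously_of_ball/E_minus_ball_cont.
- by move=> /lsc_at_of_lsc_on hl; apply/extends_radially_of_ball/E_minus_ball_radial.
- by move=> /lsc_at_opp_of_usc_on hl; apply/extends_radially_of_ball/E_plus_ball_radial.
Qed.
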